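(* Let $(\mathcal{X},\mathsf{dist})$ be a metric space with $\mathcal{X}=\mathcal{X}^{(0)}\cup\mathcal{X}^{(1)}$ a disjoint union of two classes, where every sample in $\mathcal{X}^{(i)}$ has label $i$, and let $\mathcal{X}_{\text{train}}\subset\mathcal{X}$ be a training set with $\mathcal{X}_{\text{train}}^{(i)}=\mathcal{X}_{\text{train}}\cap\mathcal{X}^{(i)}$. Let $R>0$ and consider the 1-nearest-neighbor classifier $f_{\text{1-nn}}$ with radius $R$. If the data distribution is $R$-aligned, then $f_{\text{1-nn}}$ has accuracy $1$ on it, i.e. $F_{\text{1-nn}}(x)=y$ for every sample $x$ of the distribution with true label $y$.
   Context: For $x\in\mathcal{X}$ define $\mathsf{dist}(x,\mathcal{X}_{\text{train}}^{(i)})=\min_{x_{\text{ref}}\in\mathcal{X}_{\text{train}}^{(i)}\setminus\{x\}}\mathsf{dist}(x,x_{\text{ref}})$. The 1-nearest-neighbor binary classifier with radius $R$ is $f_{\text{1-nn}}(x)=\frac{1}{2R}\big(\mathsf{dist}(x,\mathcal{X}_{\text{train}}^{(0)}),\mathsf{dist}(x,\mathcal{X}_{\text{train}}^{(1)})\big)$, with predicted class $F_{\text{1-nn}}(x)=\arg\min_i f_{\text{1-nn}}^{(i)}(x)$, where $f^{(i)}_{\text{1-nn}}$ is the $i$-th coordinate. For $r>0$, the distribution over $\mathcal{X}^{(0)}\cup\mathcal{X}^{(1)}$ is $r$-separated if $\mathsf{dist}(\mathcal{X}^{(i)},\mathcal{X}^{(j)})\ge 2r$ for all $i\ne j$, where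 $\mathsf{dist}(\mathcal{X}^{(i)},\mathcal{X}^{(j)})=\min_{x\in\mathcal{X}^{(i)},x'\in\mathcal{X}^{(j)}}\mathsf{dist}(x,x')$. It is $R$-clustered if $\max_{x'\in\mathcal{X}^{(i)}\setminus\{x\}}\mathsf{dist}(x,x')\le 2R$ for all $x\in\mathcal{X}^{(i)}$ and all $i$. It is $R$-aligned if it is $r$-separated and $R$-clustered for some $r>R$. Accuracy is the probability over the data distribution that the predicted class equals the true label. *)

From HB Require Import structures.
From mathcomp Require Import all_boot all_order all_algebra.
From mathcomp Require Import boolp classical_sets reals constructive_ereal ereal.
Set Implicit Arguments. Unset Strict Implicit. Unset Printing Implicit Defensive.
Import Order.TTheory GRing.Theory Num.Theory.
Local Open Scope classical_set_scope.
Local Open Scope ring_scope.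

Section OneNN.
Variables (R : realType) (T : choiceType) (dist : T -> T -> R).

Definition is_metric : Prop :=
  [/\ forall x y, 0 <= dist x y,
      forall x y, dist x y = 0 <-> x = y,
      forall x y, dist x y = dist y x &
      forall x y z, dist x z <= dist x y + dist y z].

Definition train_class (Xtrain : seq T) (Xi : set T) : seq T :=
  [seq y <- Xtrain | y \in Xi].

(* dist(x, S) = min_{x_ref in S \ {x}} dist(x, x_ref), valued in \bar R
   (minimum over the empty set is +oo). *)
Definition dist_to (S : seq T) (x : T) : \bar R :=
  \big[Order.min/+oo%E]_(y <- S | y != x) (dist x y)%:E.

Definition f_1nn (Rad : R) (Xtrain : seq T) (X0 X1 : set T) (i : nat) (x : T)
  : \bar R :=
  (((2 * Rad)^-1)%:E *
    dist_to (train_class Xtrain (if i == 0%N then X0 else X1)) x)%E.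

(* predicted class: argmin_i f^(i)(x); ties broken towards class 0 *)
Definition F_1nn (Rad : R) (Xtrain : seq T) (X0 X1 : set T) (x : T) : nat :=
  if (f_1nn Rad Xtrain X0 X1 0 x <= f_1nn Rad Xtrain X0 X1 1 x)%E then 0%N
  else 1%N.

Definition r_separated (r : R) (X0 X1 : set T) : Prop :=
  (forall x x', x \in X0 -> x' \in X1 -> 2 * r <= dist x x') /\
  (forall x x', x \in X1 -> x' \in X0 -> 2 * r <= dist x x').

Definition R_clustered (Rad : R) (X0 X1 : set T) : Prop :=
  forall Xi, (Xi = X0 \/ Xi = X1) ->
  forall x x', x \in Xi -> x' \in Xi -> x' != x -> dist x x' <= 2 * Rad.

Definition R_aligned (Rad : R) (X0 X1 : set T) : Prop :=
  exists r : R, Rad < r /\ r_separated r X0 X1 /\ R_clustered Rad X0 X1.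

Definition accuracy_one (Rad : R) (Xtrain : seq T) (X0 X1 : set T) : Prop :=
  (forall x, x \in X0 -> F_1nn Rad Xtrain X0 X1 x = 0%N) /\
  (forall x, x \in X1 -> F_1nn Rad Xtrain X0 X1 x = 1%N).

End OneNN.

From HB Require Import structures.
From mathcomp Require Import all_boot all_order all_algebra.
From mathcomp Require Import boolp classical_sets reals constructive_ereal ereal.
From mathcomp Require Import lra.
Set Implicit Arguments. Unset Strict Implicit. Unset Printing Implicit Defensive.
Import Order.TTheory GRing.Theory Num.Theory.
Local Open Scope classical_set_scope.
Local Open Scope ring_scope.

(* A sample x of class i has a training point of its own class at distance at
   most 2R (clustering), while every training point of the other class lies at
   distance at least 2r > 2R (separation).  Hence the nearest-neighbour distance
   to its own class is strictly smaller, and since both coordinates of f_1nn are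
   scaled by the same positive factor 1/(2R), the argmin is i. *)

Section NearestNeighbour.
Variables (R : realType) (T : choiceType) (dist : T -> T -> R).

Lemma dist_to_le (S : seq T) (x y : T) :
  y \in S -> y != x -> (dist_to dist S x <= (dist x y)%:E)%E.
Proof.
rewrite /dist_to; elim: S => [//|z S IH].
rewrite in_cons big_cons => /orP[/eqP <- yx|yS yx].
  by rewrite yx ge_min lexx.
by case: ifP => _; rewrite ?ge_min IH ?orbT.
Qed.

Lemma le_dist_to (S : seq T) (x : T) (a : R) :
  (forall y, y \in S -> y != x -> a <= dist x y) ->
  (a%:E <= dist_to dist S x)%E.
Proof.
rewrite /dist_to; elim: S => [|z S IH] aS; first by rewrite big_nil leey.
have aS' : (a%:E <= \big[Order.min/+oo%E]_(y <- S | y != x) (dist x y)%:E)%E.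
  by apply: IH => y yS; apply: aS; rewrite in_cons yS orbT.
rewrite big_cons; case: ifP => zx //.
by rewrite le_min aS' andbT lee_fin aS // in_cons eqxx.
Qed.

Lemma dist_to_lt (S S' : seq T) (x y : T) (a : R) :
  y \in S -> y != x -> dist x y < a ->
  (forall z, z \in S' -> z != x -> a <= dist x z) ->
  (dist_to dist S x < dist_to dist S' x)%E.
Proof.
move=> yS yx xy_lt_a aS'.
apply: le_lt_trans (dist_to_le yS yx) _.
by apply: lt_le_trans (le_dist_to aS'); rewrite lte_fin.
Qed.

Lemma mem_train_class (Xtrain : seq T) (Xi : set T) (y : T) :
  y \in train_class Xtrain Xi -> y \in Xi.
Proof. by rewrite mem_filter => /andP[]. Qed.

Lemma F_1nnE (Rad : R) (Xtrain : seq T) (X0 X1 : set T) (x : T) : 0 < Rad ->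
  F_1nn dist Rad Xtrain X0 X1 x =
  if (dist_to dist (train_class Xtrain X0) x <=
      dist_to dist (train_class Xtrain X1) x)%E then 0%N else 1%N.
Proof.
move=> Rad_gt0; have c_gt0 : (0 < ((2 * Rad)^-1)%:E)%E.
  by rewrite lte_fin invr_gt0 mulr_gt0.
by rewrite /F_1nn /f_1nn /= lee_pmul2l.
Qed.

Lemma dist_to_own_class_lt (Rad r : R) (Xtrain : seq T) (Xi Xj : set T) (x : T) :
  Rad < r ->
  (forall x x', x \in Xi -> x' \in Xj -> 2 * r <= dist x x') ->
  (forall x x', x \in Xi -> x' \in Xi -> x' != x -> dist x x' <= 2 * Rad) ->
  x \in Xi -> (exists2 y, y \in train_class Xtrain Xi & y != x) ->
  (dist_to dist (train_class Xtrain Xi) x <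
   dist_to dist (train_class Xtrain Xj) x)%E.
Proof.
move=> Rad_lt_r sep clust xXi [y yXi yx].
apply: (dist_to_lt yXi yx (a := 2 * r)) => [|z zXj _].
  by apply: le_lt_trans (clust x y xXi (mem_train_class yXi) yx) _; lra.
exact: sep x z xXi (mem_train_class zXj).
Qed.

End NearestNeighbour.

Theorem lemma3p4 (R : realType) (T : choiceType) (dist : T -> T -> R)
  (X0 X1 : set T) (Xtrain : seq T) (Rad : R) :
  is_metric dist ->
  X0 `&` X1 = set0 ->
  (forall y, y \in Xtrain -> y \in X0 `|` X1) ->
  (* each sample has a training point of its own class other than itself *)
  (forall x, x \in X0 -> exists2 y, y \in train_class Xtrain X0 & y != x) ->
  (forall x, x \in X1 -> exists2 y, y \in train_class Xtrain X1 & y != x) ->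
  0 < Rad ->
  R_aligned dist Rad X0 X1 ->
  accuracy_one dist Rad Xtrain X0 X1.
Proof.
move=> _ _ _ own0 own1 Rad_gt0 [r [Rad_lt_r [[sep01 sep10] clust]]].
split=> x xX; rewrite F_1nnE //.
- by rewrite (ltW (dist_to_own_class_lt Rad_lt_r sep01
    (clust X0 (or_introl erefl)) xX (own0 x xX))).
- by rewrite leNgt (dist_to_own_class_lt Rad_lt_r sep10
    (clust X1 (or_intror erefl)) xX (own1 x xX)).
Qed.
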